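(* If $K$ is a compact Collins–Roscoe space, then $K$ is monotonically Sokolov.
   Context: All spaces are Hausdorff. A family $\mathcal N$ of subsets of a space $T$ is an external network of $A\subset T$ in $T$ if for every $a\in A$ and every open $U\ni a$ there is $N\in\mathcal N$ with $a\in N\subset U$. A space $T$ is a Collins–Roscoe space if to each $x\in T$ one can assign a countable family $\mathcal O(x)$ of subsets of $T$ such that for every $A\subset T$, $\bigcup\{\mathcal O(x): x\in A\}$ is an external network of $\overline{A}$ in $T$. Let $X,Y$ be sets, $\mathcal O$ a family of subsets of $X$ closed under countable increasing unions, $\mathcal N$ a family of subsets of $Y$, and $f:\mathcal O\to\mathcal N$. Then $f$ is $\omega$-monotone if: (a) $f(A)$ is countable for every countable $A\in\mathcal O$; (b) $A\subset B$, $A,B\in\mathcal O$ imply $f(A)\subset f(B)$; (c) if $A_n\in\mathcal O$ and $A_n\subset A_{n+1}$ for all $n\in\omega$ then $f(\bigcup_n A_n)=\bigcup_n f(A_n)$. A space $T$ is monotonically Sokolov if to every countable family $\mathcal F$ of closed subsets of $T$ one can assign a continuous retraction $r_{\mathcal F}:T\to T$ and a countable external network $\mathcal N(\mathcal F)$ of $r_{\mathcal F}(T)$ in $T$ such that $r_{\mathcal F}(F)\subset F$ for every $F\in\mathcal F$ and the assignment $\mathcal F\mapsto\mathcal N(\mathcal F)$ is $\omega$-monotone. *)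

From HB Require Import structures.
From mathcomp Require Import all_boot all_order.
From mathcomp Require Import all_classical.
From mathcomp Require Import topology.
Set Implicit Arguments. Unset Strict Implicit. Unset Printing Implicit Defensive.
Local Open Scope classical_set_scope.

Definition external_network {T : topologicalType} (N : set (set T)) (A : set T) : Prop :=
  forall a, A a -> forall U : set T, open U -> U a ->
    exists2 N0, N N0 & N0 a /\ N0 `<=` U.

Definition collins_roscoe (T : topologicalType) : Prop :=
  exists O : T -> set (set T),
    (forall x, countable (O x)) /\
    (forall A : set T, external_network (\bigcup_(x in A) O x) (closure A)).

(* omega-monotone map f : Dom -> set Y, Dom a family of subsets of X
   (assumed closed under countable increasing unions). *)
Definition omega_monotone {X Y : Type} (Dom : set (set X)) (f : set X -> set Y) : Prop :=
  [/\ (forall A, Dom A -> countable A -> countable (f A)),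
      (forall A B, Dom A -> Dom B -> A `<=` B -> f A `<=` f B) &
      (forall An : nat -> set X, (forall n, Dom (An n)) ->
         (forall n, An n `<=` An n.+1) ->
         f (\bigcup_n An n) = \bigcup_n f (An n))].

Definition ctbl_closed_families (T : topologicalType) : set (set (set T)) :=
  [set F | countable F /\ (forall C, F C -> closed C)].

Definition retraction {T : topologicalType} (r : T -> T) : Prop :=
  continuous r /\ (forall x, r (r x) = r x).

Definition monotonically_sokolov (T : topologicalType) : Prop :=
  exists (r : set (set T) -> T -> T) (N : set (set T) -> set (set T)),
    (forall F, @ctbl_closed_families T F ->
       [/\ retraction (r F),
           countable (N F),
           external_network (N F) (range (r F)) &
           (forall C, F C -> r F @` C `<=` C)]) /\
    omega_monotone (@ctbl_closed_families T) N.

From HB Require Import structures.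
From mathcomp Require Import all_boot all_order all_algebra.
From mathcomp Require Import all_classical all_reals.
From mathcomp Require Import topology normedtype.
From mathcomp Require Import Rstruct finmap lra.
Import Order.TTheory GRing.Theory Num.Theory.
Import numFieldNormedType.Exports.
Local Open Scope classical_set_scope.
Local Open Scope ring_scope.
Set Implicit Arguments. Unset Strict Implicit. Unset Printing Implicit Defensive.

(* Fix a countable family F of closed sets.  Close a countable set D of
   points under the step: for every finite family of cells
   {z | |f z * (k+1) - j| < 1}, where f is the Urysohn function of the
   closures of two members of the network O(D) = U_{d in D} O(d), and for
   every C in F and for C = K, add a point of C lying in all these cells if
   there is one.  For x in C, the traces on D `&` C of the finite families of
   cells around x then form a proper filter, and a cluster point y lies in
   closure (D `&` C) and agrees with x on every such f.  The Collins-Roscoe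
   property makes these f separate the points of closure D, so y =: r(x) is
   unique; hence r is a retraction onto closure D mapping each C into itself,
   continuous because K is compact.  O(D) is a countable external network of
   closure D, and F |-> O(D) is omega-monotone because each step only looks
   at finitely many points. *)

Lemma countableU (T : Type) (A B : set T) :
  countable A -> countable B -> countable (A `|` B).
Proof.
move=> cA cB; have : countable (\bigcup_(b in [set: bool]) if b then A else B).
  by apply: bigcup_countable => // -[].
by apply: sub_countable; apply: subset_card_le => z [Az|Bz]; [exists true|exists false].
Qed.

Lemma countable_image (T U : Type) (f : T -> U) (A : set T) :
  countable A -> countable (f @` A).
Proof. exact/sub_countable/card_image_le. Qed.

Lemma subset_incr_homo (T : Type) (A : nat -> set T) :
  (forall n, A n `<=` A n.+1) -> {homo A : n m / (n <= m)%N >-> n `<=` m}.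
Proof.
move=> Ai n m; elim: m => [|m IH]; first by rewrite leqn0 => /eqP ->.
by rewrite leq_eqVlt => /orP[/eqP ->//|/IH nm]; apply: subset_trans nm (Ai m).
Qed.

Lemma seq_sub_bigcup_incr (T : eqType) (A : nat -> set T) (s : seq T) :
  {homo A : n m / (n <= m)%N >-> n `<=` m} ->
  (forall x, x \in s -> exists n, A n x) ->
  exists m, forall x, x \in s -> A m x.
Proof.
move=> Am; elim: s => [|x s IH] sA; first by exists 0%N.
have [n Anx] := sA x (mem_head x s).
have [m sAm] : exists m, forall y, y \in s -> A m y.
  by apply: IH => y ys; apply: sA; rewrite inE ys orbT.
exists (maxn n m) => y; rewrite inE => /orP[/eqP->|ys].
  exact: Am (leq_maxl n m) _ Anx.
exact: Am (leq_maxr n m) _ (sAm _ ys).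
Qed.

Lemma fset_sub_bigcup_incr (T : choiceType) (A : nat -> set T) (P : {fset T}) :
  {homo A : n m / (n <= m)%N >-> n `<=` m} ->
  (forall x, x \in P -> exists n, A n x) -> exists m, [set` P] `<=` A m.
Proof. by move=> Am /(seq_sub_bigcup_incr Am) [m PAm]; exists m => x /PAm. Qed.

Lemma external_networkS (T : topologicalType) (N : set (set T)) (A B : set T) :
  B `<=` A -> external_network N A -> external_network N B.
Proof. by move=> BA hN a /BA; apply: hN. Qed.


Section Cells.
Context (T : Type) (R : realType).

Definition cell (f : T -> R) (j : int) (k : nat) : set T :=
  [set z | `|f z * k.+1%:R - j%:~R| < 1].

Lemma cell_floor (f : T -> R) k x : cell f (Num.floor (f x * k.+1%:R)) k x.
Proof.
have /andP[lo hi] := floor_itv (f x * k.+1%:R); rewrite intrD in hi.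
rewrite /cell /= ger0_norm ?subr_ge0 //; lra.
Qed.

Lemma cell_dist (f : T -> R) j k a b :
  cell f j k a -> cell f j k b -> `|f a - f b| * k.+1%:R < 2.
Proof.
rewrite /cell /= => ha hb; rewrite -[k.+1%:R]ger0_norm // -normrM mulrBl.
have := ler_distD (j%:~R) (f a * k.+1%:R) (f b * k.+1%:R).
rewrite (distrC j%:~R); lra.
Qed.
End Cells.

Section Scales.
Context (R : realType).

Lemma scaled_dist_lt_eq (a b c : R) :
  (forall k : nat, `|a - b| * k.+1%:R < c) -> a = b.
Proof.
move=> abc; apply/eqP; rewrite -subr_eq0 -normr_eq0; apply: contraT => ab0.
have d0 : 0 < `|a - b| by rewrite lt_def ab0 normr_ge0.
have := truncnS_gt (c / `|a - b|); rewrite ltr_pdivrMr // mulrC.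
by rewrite ltNge ltW // abc.
Qed.

Lemma nbhs_scaled_dist (T : topologicalType) (f : T -> R) x (k : nat) :
  continuous f -> nbhs x [set w | `|f w - f x| * k.+1%:R < 1].
Proof.
move=> cf; have := @cvgr_dist_lt _ _ _ _ (nbhs_filter x) f (f x) (cf x) k.+1%:R^-1.
rewrite invr_gt0 ltr0n => /(_ isT); apply: filterS => w /=.
by rewrite distrC -ltr_pdivlMr ?ltr0n // mul1r.
Qed.

Lemma cluster_scaled_eq (T : topologicalType) (G : set_system T)
    (f : T -> R) z c :
  continuous f -> cluster G z ->
  (forall k : nat, G [set u | `|f u - c| * k.+1%:R < 2]) -> f z = c.
Proof.
move=> cf clz Gc; apply: (@scaled_dist_lt_eq _ _ 3) => k.
have [u [uc uz]] := clz _ _ (Gc k) (nbhs_scaled_dist z k cf).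
rewrite /= in uc; rewrite /= distrC in uz.
have := ler_distD (f u) (f z) c; rewrite -(ler_pM2r (ltr0Sn R k)) mulrDl; lra.
Qed.

End Scales.

Section Construction.
Context (K : topologicalType) (R : realType) (O : K -> set (set K)).

Definition network (S : set K) : set (set K) := \bigcup_(d in S) O d.

Definition test_funs (S : set K) : set (K -> R) :=
  [set Urysohn (closure p.1) (closure p.2) | p in network S `*` network S].

Definition test_equiv (S : set K) (x y : K) : Prop :=
  forall f, test_funs S f -> f x = f y.

Definition cells (S : set K) : set (set K) :=
  [set cell p.1 p.2.1 p.2.2 | p in test_funs S `*` [set: int * nat]].

Definition trace (P : {fset (set K)}) (C : set K) : set K :=
  C `&` \bigcap_(G in [set` P]) G.

Definition witness (P : {fset (set K)}) (C : set K) : set K :=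
  if pselect (trace P C !=set0) is left h then [set projT1 (cid h)] else set0.

Definition step (F : set (set K)) (S : set K) : set K :=
  S `|` \bigcup_(P in [set P : {fset (set K)} | [set` P] `<=` cells S])
          \bigcup_(C in setT |` F) witness P C.

Definition stage (F : set (set K)) (n : nat) : set K := iter n (step F) set0.

Definition sokolov_set (F : set (set K)) : set K := \bigcup_n stage F n.

Definition sokolov_net (F : set (set K)) : set (set K) := network (sokolov_set F).

Lemma networkS S S' : S `<=` S' -> network S `<=` network S'.
Proof. by move=> SS' N [d Sd Od]; exists d => //; apply: SS'. Qed.

Lemma test_funsS S S' : S `<=` S' -> test_funs S `<=` test_funs S'.
Proof.
by move=> SS' _ [p [N1 N2] <-]; exists p => //; split; apply: networkS SS' _ _.
Qed.

Lemma cellsS S S' : S `<=` S' -> cells S `<=` cells S'.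
Proof.
by move=> SS' _ [p [fS _] <-]; exists p => //; split => //; apply: test_funsS fS.
Qed.

Lemma witness_trace P C : witness P C `<=` trace P C.
Proof. by rewrite /witness; case: pselect => [h|//] z /= ->; exact: projT2 (cid h). Qed.

Lemma witness_neq0 P C : trace P C !=set0 -> witness P C !=set0.
Proof. by rewrite /witness; case: pselect => // h _; exists (projT1 (cid h)). Qed.

Lemma subset_step F S : S `<=` step F S.
Proof. by move=> z Sz; left. Qed.

Lemma stepS F F' S S' : F `<=` F' -> S `<=` S' -> step F S `<=` step F' S'.
Proof.
move=> FF' SS' z [Sz|[P PS [C CF wz]]]; [left; exact: SS'|right].
exists P; first exact: subset_trans PS (cellsS SS').
by exists C => //; case: CF => [->|/FF']; [left|right].
Qed.

Lemma stageS F F' n : F `<=` F' -> stage F n `<=` stage F' n.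
Proof. by move=> FF'; elim: n => [//|n IH]; apply: stepS. Qed.

Lemma stage_incr F : {homo stage F : n m / (n <= m)%N >-> n `<=` m}.
Proof. by apply: subset_incr_homo => n; apply: subset_step. Qed.

Lemma cells_bigcup_incr (X : nat -> set K) (P : {fset (set K)}) :
  {homo X : n m / (n <= m)%N >-> n `<=` m} ->
  [set` P] `<=` cells (\bigcup_n X n) -> exists m, [set` P] `<=` cells (X m).
Proof.
move=> Xm PX; apply: fset_sub_bigcup_incr => [n m nm|G /PX].
  exact/cellsS/Xm.
move=> [[f jk] [[[N1 N2] [[d1 [n1 _ X1] O1] [d2 [n2 _ X2] O2]] <-] _] <-].
exists (maxn n1 n2), (Urysohn (closure N1) (closure N2), jk) => //.
split=> //; exists (N1, N2) => //; split.
  by exists d1 => //; apply: Xm (leq_maxl n1 n2) _ X1.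
by exists d2 => //; apply: Xm (leq_maxr n1 n2) _ X2.
Qed.

Lemma stage_bigcup (Fk : nat -> set (set K)) n :
  (forall k, Fk k `<=` Fk k.+1) ->
  stage (\bigcup_k Fk k) n `<=` \bigcup_k stage (Fk k) n.
Proof.
move=> /subset_incr_homo Fm; elim: n => [//|n IH] z /= [Sz|[P PS [C CF wz]]].
  by have [k _ ?] := IH z Sz; exists k => //; apply: subset_step.
have [m PSm] := cells_bigcup_incr (fun a b ab => @stageS _ _ n (Fm a b ab))
  (subset_trans PS (cellsS IH)).
case: CF => [CT|[j _ Cj]].
  by exists m => //; right; exists P => //; exists C => //; left.
exists (maxn m j) => //; right; exists P.
  exact/(subset_trans PSm)/cellsS/stageS/Fm/leq_maxl.
by exists C => //; right; apply: Fm (leq_maxr m j) _ Cj.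
Qed.

Lemma sokolov_set_trace F (P : {fset (set K)}) C :
  [set` P] `<=` cells (sokolov_set F) -> (setT |` F) C ->
  trace P C !=set0 -> trace P (sokolov_set F `&` C) !=set0.
Proof.
move=> PS CF /witness_neq0 [w wPC]; have [Cw Pw] := witness_trace wPC.
have [m PSm] := cells_bigcup_incr (@stage_incr F) PS.
exists w; split=> //; split=> //; exists m.+1 => //; right.
by exists P => //; exists C.
Qed.

Definition cell_filter (S C : set K) (x : K) : set_system K :=
  filter_from [set P : {fset (set K)} | [set` P] `<=` cells S `&` [set G | G x]]
    (fun P => trace P (S `&` C)).

Lemma cell_filter_filter S C x : Filter (cell_filter S C x).
Proof.
apply: filter_from_filter; first by exists fset0 => G /=; rewrite in_fset0.
move=> P Q IP IQ; exists (P `|` Q)%fset.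
  by move=> G /=; rewrite in_fsetU => /orP[/IP|/IQ].
move=> z [SCz PQz]; split; split=> // G GP; apply: PQz; rewrite /= in_fsetU GP //.
exact: orbT.
Qed.

Lemma cell_filter_sub S C x : cell_filter S C x (S `&` C).
Proof. by exists fset0 => [G /=|z []//]; rewrite in_fset0. Qed.

Lemma cell_filter_scaled_dist S C x f k : test_funs S f ->
  cell_filter S C x [set u | `|f u - f x| * k.+1%:R < 2].
Proof.
move=> Sf; pose j := Num.floor (f x * k.+1%:R); exists [fset cell f j k]%fset.
  move=> G; rewrite /= inE => /eqP ->; split; last exact: cell_floor.
  by exists (f, (j, k)).
move=> u [_ Pu]; apply: cell_dist (cell_floor _ _ _); apply: Pu.
by rewrite /= inE.
Qed.

Lemma sokolov_cell_filter_proper F C x : (setT |` F) C -> C x ->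
  ProperFilter (cell_filter (sokolov_set F) C x).
Proof.
move=> CF Cx; apply: filter_from_proper; first exact: cell_filter_filter.
move=> P IP; apply: sokolov_set_trace CF _ => [G /IP []//|].
by exists x; split=> // G /IP [].
Qed.

Section Countability.
Hypothesis countable_O : forall x, countable (O x).

Lemma network_countable S : countable S -> countable (network S).
Proof. by move=> cS; apply: bigcup_countable. Qed.

Lemma cells_countable S : countable S -> countable (cells S).
Proof.
move=> cS; apply/countable_image/countableX => //.
exact/countable_image/countableX/network_countable/cS/network_countable.
Qed.

Lemma step_countable F S : countable F -> countable S -> countable (step F S).
Proof.
move=> cF cS; apply: countableU => //; apply: bigcup_countable => [|P _].
  apply: sub_countable (fset_subset_countable (cells_countable cS)).
  by apply: subset_card_le => P PS G /PS; rewrite in_setE.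
apply: bigcup_countable => [|C _]; first exact: countableU (countable1 _) cF.
by rewrite /witness; case: pselect => [h|_]; [apply: countable1|apply: countable0].
Qed.

Lemma sokolov_set_countable F : countable F -> countable (sokolov_set F).
Proof.
move=> cF; apply: bigcup_countable => // n _.
by elim: n => [|n IH] /=; [apply: countable0|apply: step_countable].
Qed.

Lemma sokolov_net_omega_monotone :
  omega_monotone (@ctbl_closed_families K) sokolov_net.
Proof.
split.
- by move=> F _ cF; apply/network_countable/sokolov_set_countable.
- move=> F F' _ _ FF'; apply: networkS => z [n _ Fz].
  by exists n => //; apply: stageS FF' _ Fz.
- move=> An _ Ai; apply/seteqP; split.
    move=> N [d [n _ /(stage_bigcup Ai) [k _ dk]] Od].
    by exists k => //; exists d => //; exists n.
  move=> N [k _]; apply: networkS => z [n _ kz]; exists n => //.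
  by apply: stageS kz => G AG; exists k.
Qed.

End Countability.
End Construction.

Section Retraction.
Context (K : topologicalType) (R : realType) (O : K -> set (set K)).
Hypotheses (hK : hausdorff_space K) (cK : compact [set: K])
  (crO : forall A : set K, external_network (network O A) (closure A)).
Lemma network_small (S : set K) y B : closure S y -> nbhs y B ->
  exists2 N, network O S N & N y /\ N `<=` B.
Proof.
move=> Sy By; have [N SN [Ny NB]] := crO Sy (@open_interior K B) By.
by exists N => //; split => //; apply: subset_trans NB (@interior_subset K B).
Qed.

Lemma nbhs_closure_sub (a : K) A : nbhs a A -> exists2 B, nbhs a B & closure B `<=` A.
Proof. exact: (compact_regular hK cK (@filterT _ _ (nbhs_filter a))). Qed.

Lemma Urysohn_neq (N1 N2 : set K) y y' :
  closure N1 `&` closure N2 = set0 -> N1 y -> N2 y' ->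
  Urysohn (closure N1) (closure N2) y != Urysohn (closure N1) (closure N2) y' :> R.
Proof.
move=> N12 N1y N2y'.
have sep : uniform_separator (closure N1) (closure N2).
  by apply: normal_uniform_separator => //; [exact: compact_normal|
    exact: closed_closure|exact: closed_closure].
rewrite (Urysohn_sub0 sep (imageP _ (subset_closure N1y))).
by rewrite (Urysohn_sub1 sep (imageP _ (subset_closure N2y'))) eq_sym oner_eq0.
Qed.

Lemma test_funs_separate S y y' : closure S y -> closure S y' -> y != y' ->
  exists2 f : K -> R, test_funs O S f & f y != f y'.
Proof.
move=> Sy Sy' yy'.
have [B1 B1y clB1] : exists2 B1, nbhs y B1 & closure B1 `<=` ~` [set y'].
  apply: nbhs_closure_sub; apply: open_nbhs_nbhs; split.
    by apply/closed_openC/accessible_closed_set1/hausdorff_accessible.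
  by move=> /= /eqP; rewrite (negPf yy').
have [N1 SN1 [N1y N1B1]] := network_small Sy B1y.
have [B2 B2y' clB2] : exists2 B2, nbhs y' B2 & closure B2 `<=` ~` closure N1.
  apply: nbhs_closure_sub; apply: open_nbhs_nbhs; split.
    exact/closed_openC/closed_closure.
  by move=> /= /(closureS N1B1) /clB1; apply.
have [N2 SN2 [N2y' N2B2]] := network_small Sy' B2y'.
exists (Urysohn (closure N1) (closure N2)); first by exists (N1, N2).
apply: Urysohn_neq N1y N2y'; apply/seteqP; split => // z [N1z N2z].
by have := clB2 z (closureS N2B2 N2z).
Qed.

Lemma test_equiv_eq S y y' : closure S y -> closure S y' ->
  test_equiv R O S y y' -> y = y'.
Proof.
move=> Sy Sy' yy'; apply/eqP; apply: contraT => /(test_funs_separate Sy Sy').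
by move=> [f /yy' ->]; rewrite eqxx.
Qed.

Lemma test_funs_continuous S (f : K -> R) : test_funs O S f -> continuous f.
Proof. by move=> [p _ <-]; apply: Urysohn_continuous. Qed.

Variable F : set (set K).
Let D := sokolov_set R O F.

Lemma sokolov_fiber C x : (setT |` F) C -> C x ->
  exists y, closure (D `&` C) y /\ test_equiv R O D y x.
Proof.
move=> CF Cx.
have BF := @sokolov_cell_filter_proper _ R O F C x CF Cx.
have [y [_ clBy]] := cK BF filterT.
exists y; split; first by move: clBy; rewrite clusterE; apply; apply: cell_filter_sub.
move=> f Df; apply: (cluster_scaled_eq (test_funs_continuous Df) clBy) => k.
exact: cell_filter_scaled_dist.
Qed.

Lemma sokolov_fiber_closure x : exists y, closure D y /\ test_equiv R O D y x.
Proof.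
have [y [Dy yx]] := sokolov_fiber (or_introl erefl) (I : setT x).
by exists y; rewrite setIT in Dy.
Qed.

Definition sokolov_retr (x : K) : K := projT1 (cid (sokolov_fiber_closure x)).
Local Notation r := sokolov_retr.

Lemma sokolov_retrP x : closure D (r x) /\ test_equiv R O D (r x) x.
Proof. exact: projT2 (cid (sokolov_fiber_closure x)). Qed.

Lemma sokolov_retr_eq x y : closure D y -> test_equiv R O D y x -> r x = y.
Proof.
move=> Dy yx; have [Drx rxx] := sokolov_retrP x.
by apply: test_equiv_eq Drx Dy _ => // f Df; rewrite (rxx f Df) (yx f Df).
Qed.

Lemma sokolov_retr_id y : closure D y -> r y = y.
Proof. by move=> Dy; apply: sokolov_retr_eq. Qed.

Lemma sokolov_retr_idem x : r (r x) = r x.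
Proof. exact/sokolov_retr_id/(sokolov_retrP x).1. Qed.

Lemma sokolov_retr_sub C : F C -> closed C -> r @` C `<=` C.
Proof.
move=> FC clC _ [x Cx <-].
have [y [DCy yx]] := sokolov_fiber (or_intror FC) Cx.
have [Dy Cy] : closure D y /\ closure C y by split; apply: closureS DCy => z [].
by rewrite (sokolov_retr_eq Dy yx) (closure_id C).1.
Qed.

Lemma sokolov_retr_continuous : continuous r.
Proof.
move=> x; have cl_rx : cluster (r @ x) `<=` [set r x].
  move=> z clz; have Dz : closure D z.
    rewrite clusterE in clz.
    rewrite (closure_id (closure D)).1; last exact: closed_closure.
    by apply: clz; apply: nearW => w; exact: (sokolov_retrP w).1.
  apply/esym/sokolov_retr_eq => // f Df.
  apply: (cluster_scaled_eq (test_funs_continuous Df) clz) => k.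
  apply: filterS (nbhs_scaled_dist x k (test_funs_continuous Df)) => w /= wx.
  by rewrite ((sokolov_retrP w).2 f Df) (lt_trans wx) ?ltr1n.
apply: (compact_cluster_set1 hK cK filterT _ filterT).
apply/seteqP; split => // _ ->.
by have [z [_ /[dup] /cl_rx ->]] := cK (_ : ProperFilter (r @ x)) filterT.
Qed.

End Retraction.

Theorem corollary1p2 (K : topologicalType) :
  hausdorff_space K -> compact [set: K] -> collins_roscoe K ->
  monotonically_sokolov K.
Proof.
move=> hK cK [O [cO crO]].
exists (sokolov_retr Rdefinitions.R O cK), (sokolov_net Rdefinitions.R O).
split; last exact: sokolov_net_omega_monotone.
move=> F [cF clF]; split.
- by split; [exact: sokolov_retr_continuous|exact: sokolov_retr_idem].
- by apply: network_countable => //; apply: sokolov_set_countable.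
- apply: external_networkS (crO _) => _ [x _ <-].
  exact: (sokolov_retrP _ _ _ F x).1.
- by move=> C FC; apply: sokolov_retr_sub => //; apply: clF.
Qed.
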